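(* Let $m,k,t$ be positive integers with $t<(m-1)/4$, let $C=\{2i\mid 2\leq i\leq t\}\cup\{1,2t+1\}$, and let $c(x)=1+\sum_{j\in C}(x^j+x^{m-j})\in\mathbb{F}_2[x]$. Then $\gcd(c(x^k),x^m-1)=1$ if and only if $\gcd(m,(2t+3)k)=\gcd(m,(2t-1)k)=\gcd(m,3k)=\gcd(m,k)$.
   Context: All polynomials are over $\mathbb{F}_2$. *)

From HB Require Import structures.
From mathcomp Require Import all_boot all_order all_algebra.
Set Implicit Arguments. Unset Strict Implicit. Unset Printing Implicit Defensive.
Import GRing.Theory.
Local Open Scope ring_scope.

(* The index set C = {2i | 2 <= i <= t} ∪ {1, 2t+1}, listed without repetition
   (for t >= 1 its elements are pairwise distinct). *)
Definition Cset (t : nat) : seq nat :=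
  [:: 1%N, (2 * t + 1)%N & [seq (2 * i)%N | i <- iota 2 (t - 1)]].

Definition cpoly (m t : nat) : {poly 'F_2} :=
  1 + \sum_(j <- Cset t) ('X^j + 'X^(m - j)).

From HB Require Import structures.
From mathcomp Require Import all_boot all_order all_algebra.
From mathcomp Require Import ring zify.
Set Implicit Arguments.
Unset Strict Implicit.
Unset Printing Implicit Defensive.
Import GRing.Theory.
Local Open Scope ring_scope.

(* Put T(x) := x^(2t+1) + sum_(j in C) (x^(2t+1+j) + x^(2t+1-j)).  Since every
   j in C is at most 2t+1 < m, we have x^(2t+1) c(x) = T(x) modulo x^m - 1 (and
   the same after substituting x^k), and x^(2t+1) is a unit modulo x^m - 1, so
   c(x^k) is coprime to x^m - 1 iff T(x^k) is.  Over F_2 the polynomial T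
   factors "cyclotomically":
       T(x) (x - 1)^3 = (x^(2t+3) - 1) (x^(2t-1) - 1) (x^3 - 1),    T(1) = 1.
   The theorem thus follows from a general criterion over any integral domain
   of characteristic 2: if T is coprime to x^k - 1 and T (x^k - 1)^3 is the
   product of the x^(e k) - 1 for three odd e, then T is coprime to x^m - 1
   iff gcd(m, e k) = gcd(m, k) for each e.  Its proof only uses that
   gcd(x^u - 1, x^v - 1) divides x^gcd(u,v) - 1, and, for the converse, the
   factor (x^h - 1)/(x^g - 1) = sum_(i < h/g) x^(g i) with h = gcd(m, e k),
   g = gcd(m, k), which is = h/g = 1 modulo x^g - 1 since h/g is odd. *)

Lemma natr_odd_char2 (S : nzRingType) (r : nat) :
  2%N \in [pchar S] -> odd r -> (r%:R : S) = 1.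
Proof.
move=> S_char2 r_odd.
by rewrite -(odd_double_half r) r_odd natrD -muln2 natrM (pcharf0 S_char2) mulr0 addr0.
Qed.

Section XnSub1.

Variable R : idomainType.
Implicit Types d p q M T : {poly R}.

Lemma dvdp_sum (I : Type) (s : seq I) (P : pred I) (F : I -> {poly R}) d :
  (forall i, P i -> d %| F i) -> d %| \sum_(i <- s | P i) F i.
Proof.
move=> dF; apply: (big_ind (fun p => d %| p)); [exact: dvdp0 | exact: dvdp_add | exact: dF].
Qed.

Lemma coprimep_congr p q M : M %| p - q -> coprimep p M = coprimep q M.
Proof.
suff imp p' q' : M %| p' - q' -> coprimep p' M -> coprimep q' M.
  by move=> Mpq; apply/idP/idP; apply: imp; rewrite // -opprB dvdpNr.
move=> Mpq /coprimepP cop; apply/coprimepP => d dq dM; apply: cop => //.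
by rewrite -(subrK q' p') dvdp_add // (dvdp_trans dM).
Qed.

Lemma dvdp_Xn_sub1 {u w : nat} : (u %| w)%N -> ('X^u - 1 : {poly R}) %| 'X^w - 1.
Proof. by case/dvdnP=> q ->; rewrite mulnC exprM (subrX1 ('X^u)) dvdp_mulr. Qed.

(* A common divisor of x^u - 1 and x^v - 1 divides x^gcd(u,v) - 1: by Bezout,
   gcd(u,v) + a v = q u, and x^(q u) - 1 = x^g (x^(a v) - 1) + (x^g - 1). *)
Lemma dvdp_Xn_sub1_gcd d (u v : nat) : (0 < u)%N ->
  d %| 'X^u - 1 -> d %| 'X^v - 1 -> d %| 'X^(gcdn u v) - 1.
Proof.
move=> u_gt0 du dv; have [a _ /dvdnP [q def_qu]] := Bezoutl v u_gt0.
have d_qu : d %| 'X^(q * u) - 1 by rewrite (dvdp_trans du) ?dvdp_Xn_sub1 ?dvdn_mull.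
have d_av : d %| 'X^(a * v) - 1 by rewrite (dvdp_trans dv) ?dvdp_Xn_sub1 ?dvdn_mull.
move: d_qu; rewrite -def_qu exprD.
have -> : 'X^(gcdn u v) * 'X^(a * v) - 1 =
    'X^(gcdn u v) * ('X^(a * v) - 1) + ('X^(gcdn u v) - 1) :> {poly R} by ring.
by rewrite dvdp_addr // dvdp_mull.
Qed.

Lemma coprimep_Xn_Xm_sub1 (n m : nat) : (0 < m)%N -> coprimep 'X^n ('X^m - 1 : {poly R}).
Proof.
move=> m_gt0; apply: coprimep_expl; rewrite coprimep_sym.
have := coprimep_XsubC ('X^m - 1 : {poly R}) 0; rewrite polyC0 subr0 => ->.
by rewrite /root !hornerE expr0n eqn0Ngt m_gt0 sub0r oppr_eq0 oner_eq0.
Qed.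

Lemma coprimep_Xn_sub1 {d} {m n k : nat} : (0 < m)%N -> (gcdn m n %| k)%N ->
  d %| 'X^m - 1 -> coprimep d ('X^k - 1) -> coprimep d ('X^n - 1).
Proof.
move=> m_gt0 mn_k dM /coprimepP dk; apply/coprimepP => e ed en; apply: dk => //.
apply: dvdp_trans (dvdp_Xn_sub1 mn_k).
by apply: dvdp_Xn_sub1_gcd => //; apply: dvdp_trans dM.
Qed.

(* Sufficiency in the criterion: a common divisor of T and x^m - 1 is coprime
   to x^k - 1, hence to each x^(e k) - 1, hence to T (x^k - 1)^3, hence to T. *)
Lemma coprimep_of_gcdn_eq (m k a b c : nat) T : (0 < m)%N ->
  coprimep T ('X^k - 1) ->
  T * ('X^k - 1) ^+ 3 = ('X^(a * k) - 1) * ('X^(b * k) - 1) * ('X^(c * k) - 1) ->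
  [/\ gcdn m (a * k) = gcdn m k, gcdn m (b * k) = gcdn m k &
      gcdn m (c * k) = gcdn m k] ->
  coprimep T ('X^m - 1).
Proof.
move=> m_gt0 coTk def_T [ha hb hc]; apply/coprimepP => d dT dM.
have dk : coprimep d ('X^k - 1) := coprimep_dvdr dT coTk.
have de e : gcdn m (e * k) = gcdn m k -> coprimep d ('X^(e * k) - 1).
  by move=> he; apply: (coprimep_Xn_sub1 m_gt0 _ dM dk); rewrite he dvdn_gcdr.
have : coprimep d (T * ('X^k - 1) ^+ 3) by rewrite def_T !coprimepMr !de.
by rewrite coprimepMr => /andP [/coprimepP coT _]; apply: coT.
Qed.

End XnSub1.

Section Char2Criterion.

Variable R : idomainType.
Hypothesis R_char2 : 2%N \in [pchar R].

(* The quotient (x^(r g) - 1)/(x^g - 1) = sum_(i < r) x^(g i) is congruent to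
   r = 1 modulo x^g - 1 when r is odd, hence coprime to x^g - 1. *)
Lemma coprimep_geom_Xn_sub1 (g r : nat) : odd r ->
  coprimep (\sum_(i < r) ('X^g) ^+ i) ('X^g - 1 : {poly R}).
Proof.
move=> r_odd; rewrite -(@coprimep_congr _ 1) ?coprime1p // -dvdpNr opprB.
have r_eq1 : (r%:R : {poly R}) = 1 by rewrite natr_odd_char2 // pchar_poly.
have -> : \sum_(i < r) ('X^g) ^+ i - 1 = \sum_(i < r) (('X^g) ^+ i - 1) :> {poly R}.
  by rewrite sumrB sumr_const card_ord r_eq1.
by apply: dvdp_sum => i; rewrite -exprM dvdp_Xn_sub1 ?dvdn_mulr.
Qed.

(* Let g = gcd(m, k), h = gcd(m, e k) = r g with r
   odd, and Q = (x^h - 1)/(x^g - 1).  Then Q is coprime to x^k - 1 and divides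
   x^(e k) - 1, hence divides T; it also divides x^m - 1, so Q is a constant
   and h = g. *)
Lemma gcdn_eq_of_coprimep (m k e : nat) (T : {poly R}) :
  (0 < m)%N -> odd e ->
  ('X^(e * k) - 1) %| T * ('X^k - 1) ^+ 3 -> coprimep T ('X^m - 1) ->
  gcdn m (e * k) = gcdn m k.
Proof.
move=> m_gt0 e_odd dvd_T coTm.
set g := gcdn m k; set h := gcdn m (e * k).
have g_gt0 : (0 < g)%N by rewrite gcdn_gt0 m_gt0.
have h_gt0 : (0 < h)%N by rewrite gcdn_gt0 m_gt0.
have g_dvd_h : (g %| h)%N by rewrite dvdn_gcd dvdn_gcdl dvdn_mull ?dvdn_gcdr.
have h_dvd_eg : (h %| e * g)%N.
  by rewrite /g muln_gcdr dvdn_gcd dvdn_mull ?dvdn_gcdl ?dvdn_gcdr.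
set r := (h %/ g)%N.
have def_h : h = (r * g)%N by rewrite divnK.
have r_odd : odd r by apply: dvdn_odd e_odd; rewrite dvdn_divLR // mulnC.
pose Q : {poly R} := \sum_(i < r) ('X^g) ^+ i.
have def_Xh : 'X^h - 1 = ('X^g - 1) * Q by rewrite def_h mulnC exprM subrX1.
have Q_Xh : Q %| 'X^h - 1 by rewrite def_Xh dvdp_mull.
have coQk : coprimep Q ('X^k - 1).
  apply: (coprimep_Xn_sub1 h_gt0 _ Q_Xh (coprimep_geom_Xn_sub1 g r_odd)).
  by rewrite dvdn_gcd (dvdn_trans (dvdn_gcdl _ _) (dvdn_gcdl _ _)) dvdn_gcdr.
have Q_T : Q %| T.
  rewrite -(Gauss_dvdpl _ (coprimep_expr 3 coQk)) (dvdp_trans Q_Xh) //.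
  by rewrite (dvdp_trans _ dvd_T) // dvdp_Xn_sub1 // dvdn_gcdr.
have Q_Xm : Q %| 'X^m - 1 by rewrite (dvdp_trans Q_Xh) // dvdp_Xn_sub1 // dvdn_gcdl.
have /eqP size_Q : size Q == 1%N by rewrite size_poly_eq1 (coprimepP _ _ coTm).
have size_Xn_sub1 n : (0 < n)%N -> size ('X^n - 1 : {poly R}) = n.+1.
  by move=> n_gt0; rewrite -polyC1 size_XnsubC.
have Xg_neq0 : ('X^g - 1 : {poly R}) != 0 by rewrite -size_poly_eq0 size_Xn_sub1.
have Q_neq0 : Q != 0 by rewrite -size_poly_eq0 size_Q.
have := congr1 (fun p : {poly R} => size p) def_Xh.
rewrite /= size_mul // size_Q !size_Xn_sub1 //.
by rewrite addn1 => -[].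
Qed.

Lemma coprimep_Xn_sub1_criterion (m k a b c : nat) (T : {poly R}) :
  (0 < m)%N -> odd a -> odd b -> odd c -> coprimep T ('X^k - 1) ->
  T * ('X^k - 1) ^+ 3 = ('X^(a * k) - 1) * ('X^(b * k) - 1) * ('X^(c * k) - 1) ->
  coprimep T ('X^m - 1) <->
  [/\ gcdn m (a * k) = gcdn m k, gcdn m (b * k) = gcdn m k &
      gcdn m (c * k) = gcdn m k].
Proof.
move=> m_gt0 a_odd b_odd c_odd coTk def_T; split; last first.
  exact: coprimep_of_gcdn_eq coTk def_T.
move=> coTm; split; apply: gcdn_eq_of_coprimep coTm => //; rewrite def_T.
- by rewrite -mulrA dvdp_mulr.
- by rewrite mulrAC dvdp_mull.
- exact: dvdp_mull.
Qed.

End Char2Criterion.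

(* The key polynomial identity, in any commutative ring of characteristic 2.
   With z = x^(2s) and G = sum_(i < s) x^(2i), so that (x^2 + 1) G = z + 1,
   it becomes the factorization of T_(s+1) below.  Multiplied by x^2 + 1
   instead of (x + 1)^3, the left factor equals
   (x^2 + x + 1)(x^5 z + 1)(x z + 1) up to the term 2 x^4 z; it remains to use
   (x + 1)^3 = (x^2 + 1)(x + 1) and (x^2 + x + 1)(x + 1) = x^3 + 1, both valid
   in characteristic 2. *)
Lemma char2_identity (S : comNzRingType) (x z G : S) : 2%N \in [pchar S] ->
  (x ^+ 2 + 1) * G = z + 1 ->
  (1 + x ^+ 2 * z + x ^+ 3 * z + x ^+ 4 * z + x ^+ 6 * z ^+ 2 + (x + x ^+ 7 * z) * G)
    * (x + 1) ^+ 3 = (x ^+ 5 * z + 1) * (x * z + 1) * (x ^+ 3 + 1).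
Proof.
move=> S_char2 def_G; have two0 : (2%:R : S) = 0 := pcharf0 S_char2.
have cube : (x + 1) ^+ 3 = (x ^+ 2 + 1) * (x + 1).
  by rewrite -[RHS]addr0 -(mul0r (x ^+ 2 + x)) -two0; ring.
have cubic : x ^+ 3 + 1 = (x ^+ 2 + x + 1) * (x + 1).
  by rewrite -[LHS]addr0 -(mul0r (x ^+ 2 + x)) -two0; ring.
have square : (1 + x ^+ 2 * z + x ^+ 3 * z + x ^+ 4 * z + x ^+ 6 * z ^+ 2
    + (x + x ^+ 7 * z) * G) * (x ^+ 2 + 1)
    = (x ^+ 2 + x + 1) * (x ^+ 5 * z + 1) * (x * z + 1).
  rewrite mulrDl -mulrA [G * _]mulrC def_G.
  by rewrite -[RHS]addr0 -(mul0r (x ^+ 4 * z)) -two0; ring.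
by rewrite cube mulrA square cubic; ring.
Qed.

(* T(x) = x^(2t+1) + sum_(j in C) (x^(2t+1+j) + x^(2t+1-j)): the polynomial
   x^(2t+1) c(x) with the exponents reduced modulo m. *)
Definition Tpoly (t : nat) : {poly 'F_2} :=
  'X^(2 * t + 1) + \sum_(j <- Cset t) ('X^(2 * t + 1 + j) + 'X^(2 * t + 1 - j)).

Lemma pchar_polyF2 : 2%N \in [pchar {poly 'F_2}].
Proof. by rewrite pchar_poly pchar_Fp. Qed.

Lemma Tpoly_split (s : nat) : Tpoly s.+1 =
  1 + 'X^2 * 'X^(2 * s) + 'X^3 * 'X^(2 * s) + 'X^4 * 'X^(2 * s)
  + 'X^6 * ('X^(2 * s)) ^+ 2 + ('X + 'X^7 * 'X^(2 * s)) * \sum_(i < s) ('X^2) ^+ i.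
Proof.
rewrite /Tpoly /Cset !big_cons big_map.
have -> : iota 2 (s.+1 - 1) = map (addn 2) (index_iota 0 s).
  by rewrite /index_iota subn0 -iotaDl subn1.
rewrite big_map big_mkord big_split /= mulrDl !mulr_sumr.
have -> : \sum_(i < s) 'X^(2 * s.+1 + 1 + 2 * (2 + i)) =
    \sum_(i < s) 'X^7 * 'X^(2 * s) * ('X^2) ^+ i :> {poly 'F_2}.
  by apply: eq_bigr => i _; rewrite -exprM -!exprD; congr ('X^_); lia.
have -> : \sum_(i < s) 'X^(2 * s.+1 + 1 - 2 * (2 + i)) =
    \sum_(i < s) 'X * ('X^2) ^+ i :> {poly 'F_2}.
  rewrite (reindex_inj rev_ord_inj) /=; apply: eq_bigr => i _.
  by rewrite -exprM -exprS; congr ('X^_); have := ltn_ord i; lia.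
have pow a b : ('X^(a + b) : {poly 'F_2}) = 'X^a * 'X^b by rewrite exprD.
rewrite subnn expr0 (_ : 2 * s.+1 + 1 - 1 = 2 + 2 * s)%N; last lia.
rewrite (_ : 2 * s.+1 + 1 + 1 = 4 + 2 * s)%N; last lia.
rewrite (_ : 2 * s.+1 + 1 + (2 * s.+1 + 1) = 6 + (2 * s + 2 * s))%N; last lia.
rewrite (_ : 2 * s.+1 + 1 = 3 + 2 * s)%N; last lia.
by rewrite !pow -expr2; ring.
Qed.

Lemma Tpoly_factor (t : nat) : (0 < t)%N ->
  Tpoly t * ('X - 1) ^+ 3 =
  ('X^(2 * t + 3) - 1) * ('X^(2 * t - 1) - 1) * ('X^3 - 1).
Proof.
case: t => // s _.
have minus1 (p : {poly 'F_2}) : p - 1 = p + 1 by rewrite (oppr_pchar2 pchar_polyF2).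
rewrite Tpoly_split !minus1 (_ : 2 * s.+1 + 3 = 5 + 2 * s)%N; last lia.
rewrite (_ : 2 * s.+1 - 1 = 1 + 2 * s)%N; last lia.
rewrite (exprD _ 5) (exprD _ 1) expr1; apply: char2_identity pchar_polyF2 _.
by rewrite -!minus1 exprM -subrX1.
Qed.

(* T(1) = 1: every pair x^(2t+1+j) + x^(2t+1-j) vanishes at 1 over F_2. *)
Lemma Tpoly_sub1 (t : nat) : ('X - 1) %| Tpoly t - 1.
Proof.
rewrite -polyC1 dvdp_XsubCl /root /Tpoly !hornerE horner_sum big1 ?expr1n ?addr0 ?subrr //.
by move=> j _; rewrite !hornerE !expr1n; apply/eqP.
Qed.

Lemma comp_Xn_sub1 (R : comNzRingType) (n k : nat) :
  ('X^n - 1 : {poly R}) \Po 'X^k = 'X^(n * k) - 1.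
Proof. by rewrite rmorphB rmorph1 /= comp_Xn_poly -exprM mulnC. Qed.

Lemma Cset_le (t j : nat) : j \in Cset t -> (j <= 2 * t + 1)%N.
Proof.
rewrite !inE => /or3P [/eqP -> | /eqP -> | /mapP [i]]; [lia | lia |].
by rewrite mem_iota => /andP [i_ge2 i_lt] ->; lia.
Qed.

(* x^(2t+1) c(x) = T(x) modulo x^m - 1, also after substituting x^k: the term
   x^(2t+1) x^(m-j) is congruent to x^(2t+1-j) since j <= 2t+1 < m. *)
Lemma cpoly_congr (m t k : nat) : (2 * t + 1 < m)%N ->
  ('X^m - 1) %| 'X^((2 * t + 1) * k) * (cpoly m t \Po 'X^k) - (Tpoly t \Po 'X^k).
Proof.
move=> tm; rewrite /cpoly /Tpoly !rmorphD !rmorph_sum rmorph1 /= mulrDr mulr1.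
rewrite comp_Xn_poly -exprM mulnC mulr_sumr opprD addrACA subrr add0r -sumrB.
rewrite big_seq; apply: dvdp_sum => j /Cset_le j_le.
rewrite !rmorphD /= !comp_Xn_poly -!exprM mulrDr -!exprD.
rewrite (_ : k * (2 * t + 1) + k * j = k * (2 * t + 1 + j))%N; last lia.
rewrite (_ : k * (2 * t + 1) + k * (m - j) = k * (2 * t + 1 - j) + k * m)%N; last nia.
rewrite exprD opprD addrACA subrr add0r -{2}['X^(k * _)]mulr1 -mulrBr.
by rewrite dvdp_mull // mulnC dvdp_Xn_sub1 ?dvdn_mulr.
Qed.

(* Hence c(x^k) and T(x^k) are coprime to x^m - 1 simultaneously, x^((2t+1) k)
   being a unit modulo x^m - 1. *)
Lemma coprimep_cpoly_Tpoly (m t k : nat) : (0 < m)%N -> (2 * t + 1 < m)%N ->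
  coprimep (cpoly m t \Po 'X^k) ('X^m - 1) = coprimep (Tpoly t \Po 'X^k) ('X^m - 1).
Proof.
move=> m_gt0 tm.
by rewrite -(coprimep_congr (cpoly_congr k tm)) coprimepMl coprimep_Xn_Xm_sub1.
Qed.

Theorem proposition10 (m k t : nat) (hm : (0 < m)%N) (hk : (0 < k)%N)
  (ht : (0 < t)%N) (htm : (4 * t + 1 < m)%N) :
  coprimep (cpoly m t \Po 'X^k) ('X^m - 1) <->
  [/\ gcdn m ((2 * t + 3) * k) = gcdn m k,
      gcdn m ((2 * t - 1) * k) = gcdn m k &
      gcdn m (3 * k) = gcdn m k].
Proof.
rewrite coprimep_cpoly_Tpoly //; last lia.
have X_sub1 : ('X - 1) \Po 'X^k = 'X^k - 1 :> {poly 'F_2}.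
  by rewrite rmorphB rmorph1 /= comp_polyX.
have T_sub1 : ('X^k - 1) %| (Tpoly t \Po 'X^k) - 1.
  by have := dvdp_comp_poly 'X^k (Tpoly_sub1 t); rewrite X_sub1 rmorphB rmorph1.
have T_factor : (Tpoly t \Po 'X^k) * ('X^k - 1) ^+ 3 =
    ('X^((2 * t + 3) * k) - 1) * ('X^((2 * t - 1) * k) - 1) * ('X^(3 * k) - 1).
  by rewrite -X_sub1 -!comp_Xn_sub1 -rmorphXn -!rmorphM Tpoly_factor.
apply: (coprimep_Xn_sub1_criterion (pchar_Fp (p := 2) erefl) hm _ _ _ _ T_factor).
- by rewrite oddD oddM.
- by rewrite oddB ?oddM //; lia.
- by [].
- by rewrite (coprimep_congr T_sub1) coprime1p.
Qed.
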